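(* Let $f:\mathbb{R}^n\to\mathbb{R}^m$ be smooth and let $M$ be its graph in $\mathbb{R}^{n+m}$ with induced metric. Then for each $\alpha$, the Ricci operator $Rc$ and the shape operator $A^\alpha$ satisfy $$A^\alpha Rc-Rc\,A^\alpha=U^{\mu\nu}\big((\mathrm{Tr}A^\mu)R^\perp_{\nu\alpha}+R^\perp_{\alpha\mu}A^\nu+A^\mu R^\perp_{\alpha\nu}\big),$$ with summation over $\mu,\nu$.
   Context: $M=\{(x,f(x))\}$ has tangent frame $\partial_i=(e_i,f^\alpha_ie_\alpha)$, metric $g_{ij}=\delta_{ij}+f^\alpha_if^\alpha_j$, and normal vectors $\eta^\alpha=(-Df^\alpha,e_\alpha)$, $1\le\alpha\le m$. $U_{\alpha\beta}=\langle\eta^\alpha,\eta^\beta\rangle=\delta_{\alpha\beta}+\langle Df^\alpha,Df^\beta\rangle$ with inverse $U^{\alpha\beta}$. The shape operator with respect to $\eta^\alpha$ is $A^\alpha X=-(\bar\nabla_X\eta^\alpha)^\top$, i.e. $A^\alpha\partial_i=f^\alpha_{ik}g^{kj}\partial_j$. The normal curvature operators are $R^\perp_{\alpha\beta}=A^\beta A^\alpha-A^\alpha A^\beta$. The Ricci operator $Rc:TM\to TM$ is defined by $\langle Rc(X),Y\rangle=\mathrm{Ric}(X,Y)$. *)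

From HB Require Import structures.
From mathcomp Require Import all_boot all_order all_algebra.
From mathcomp Require Import all_classical all_reals all_analysis.
Set Implicit Arguments.
Unset Strict Implicit.
Unset Printing Implicit Defensive.
Import Order.TTheory GRing.Theory Num.Theory.
Import numFieldNormedType.Exports.
Local Open Scope ring_scope.

(* Conventions.
   - Points of R^n are row vectors 'rV[R]_n; f : R^n -> R^m is 'rV_n -> 'rV_m,
     with component alpha : 'I_m given by  x |-> f x ord0 alpha.
   - A linear operator T on T_xM is represented in the coordinate frame
     (d_1,...,d_n) by the matrix M with  T d_j = sum_i M i j d_i
     (column convention), so composition of operators is matrix product *m
     and the trace of an operator is \tr of its matrix. *)

Section Graph.
Variables (R : realType) (n m : nat).

Definition evec (i : 'I_n) : 'rV[R]_n := delta_mx 0 i.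

Definition pd (i : 'I_n) (h : 'rV[R]_n -> R) : 'rV[R]_n -> R :=
  fun x => derive h x (evec i).

Definition iter_pd (l : seq 'I_n) (h : 'rV[R]_n -> R) : 'rV[R]_n -> R :=
  foldr pd h l.

Definition smooth_fun (h : 'rV[R]_n -> R) : Prop :=
  forall (l : seq 'I_n) (x : 'rV[R]_n), differentiable (iter_pd l h) x.

Variable f : 'rV[R]_n -> 'rV[R]_m.

Definition fcomp (a : 'I_m) : 'rV[R]_n -> R := fun x => f x ord0 a.

Definition Df (a : 'I_m) (i : 'I_n) : 'rV[R]_n -> R := pd i (fcomp a).

Definition metric (i j : 'I_n) : 'rV[R]_n -> R :=
  fun x => (i == j)%:R + \sum_(a < m) Df a i x * Df a j x.

Definition gmx (x : 'rV[R]_n) : 'M[R]_n := \matrix_(i, j) metric i j x.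
Definition ginv (x : 'rV[R]_n) : 'M[R]_n := invmx (gmx x).

Definition christoffel (k i j : 'I_n) : 'rV[R]_n -> R :=
  fun x => 2^-1 * \sum_(l < n) ginv x k l *
             (pd i (metric j l) x + pd j (metric i l) x - pd l (metric i j) x).

(* R(d_i,d_j)d_k = nabla_i nabla_j d_k - nabla_j nabla_i d_k = R^l_{ijk} d_l *)
Definition riem (l i j k : 'I_n) : 'rV[R]_n -> R :=
  fun x => pd i (christoffel l j k) x - pd j (christoffel l i k) x
           + \sum_(p < n) (christoffel l i p x * christoffel p j k x
                           - christoffel l j p x * christoffel p i k x).

Definition ricci (j k : 'I_n) : 'rV[R]_n -> R :=
  fun x => \sum_(i < n) riem i i j k x.

Definition Ricmx (x : 'rV[R]_n) : 'M[R]_n := \matrix_(j, k) ricci j k x.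

(* Ricci operator: <Rc X, Y> = Ric(X,Y) *)
Definition Rc_op (x : 'rV[R]_n) : 'M[R]_n := ginv x *m Ricmx x.

Definition Hess (a : 'I_m) (x : 'rV[R]_n) : 'M[R]_n :=
  \matrix_(i, k) pd k (Df a i) x.

Definition shapeop (a : 'I_m) (x : 'rV[R]_n) : 'M[R]_n := ginv x *m Hess a x.

Definition Umx (x : 'rV[R]_n) : 'M[R]_m :=
  \matrix_(a, b) ((a == b)%:R + \sum_(i < n) Df a i x * Df b i x).
Definition Uinv (x : 'rV[R]_n) : 'M[R]_m := invmx (Umx x).

Definition normal_curv (a b : 'I_m) (x : 'rV[R]_n) : 'M[R]_n :=
  shapeop b x *m shapeop a x - shapeop a x *m shapeop b x.

End Graph.

From mathcomp Require Import all_boot all_order all_algebra.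
From mathcomp Require Import all_classical all_reals all_analysis.
From mathcomp Require Import ring.
Import Order.TTheory GRing.Theory Num.Theory.
Import numFieldNormedType.Exports.
Local Open Scope ring_scope.
Set Implicit Arguments.
Unset Strict Implicit.
Unset Printing Implicit Defensive.

(* For a graph everything is expressed through the Jacobian D = (f^a_i), the
   metric g = 1 + D^T D and W = g^-1 D^T.  The Christoffel matrices are
   Gamma_i = W (d_i D), and differentiating g^-1 gives
   d_i W = g^-1 (d_i D)^T P - W (d_i D) W  with  P = 1 - D W = U^-1
   (push-through identity).  In R_ij = d_i Gamma_j - d_j Gamma_i + [Gamma_i, Gamma_j]
   the third derivatives cancel by the symmetry of mixed partials and the
   quadratic terms cancel against the d_i W terms, leaving the Gauss equation
   R_ij = g^-1 ((d_i D)^T P (d_j D) - (d_j D)^T P (d_i D)).  Contracting yields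
   Rc = U^{ba} (Tr A^b A^a - A^b A^a), and the claimed formula is the expansion
   of [A^alpha, Rc].  The symmetry of mixed partials (Schwarz) is derived from
   the mean value theorem. *)

Section PartialDerivatives.
Variables (R : realType) (n : nat).
Implicit Types (h : 'rV[R]_n -> R) (x : 'rV[R]_n).

Lemma pdD i h1 h2 x : differentiable h1 x -> differentiable h2 x ->
  pd i (fun y => h1 y + h2 y) x = pd i h1 x + pd i h2 x.
Proof. by move=> d1 d2; rewrite /pd (deriveD (f := h1)) //; apply: diff_derivable. Qed.

Lemma pdM i h1 h2 x : differentiable h1 x -> differentiable h2 x ->
  pd i (fun y => h1 y * h2 y) x = pd i h1 x * h2 x + h1 x * pd i h2 x.
Proof.
move=> d1 d2; rewrite /pd (deriveM (f := h1)); try exact: diff_derivable.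
by rewrite addrC /GRing.scale /= mulrC [h1 x * _]mulrC.
Qed.

Lemma pdV i h x : differentiable h x -> h x != 0 ->
  pd i (fun y => (h y)^-1) x = - (h x)^-2 * pd i h x.
Proof. by move=> dh hx0; rewrite /pd deriveV //; apply: diff_derivable. Qed.

Lemma pd_cst i (c : R) x : pd i (fun _ => c) x = 0.
Proof. exact: derive_cst. Qed.

Lemma pd_sum p i (F : 'I_p -> 'rV[R]_n -> R) x :
  (forall j, differentiable (F j) x) ->
  pd i (fun y => \sum_j F j y) x = \sum_j pd i (F j) x.
Proof.
move=> dF; rewrite /pd -fct_sumE derive_sum // => j; exact: diff_derivable.
Qed.

End PartialDerivatives.

Section SmoothFunctions.
Variables (R : realType) (n : nat).
Implicit Types (h : 'rV[R]_n -> R) (x : 'rV[R]_n).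

Fixpoint Ck k h : Prop :=
  if k is k.+1 then (forall x, differentiable h x) /\ forall i, Ck k (pd i h)
  else True.

Lemma Ck_iter_pd l k h : Ck (k + size l) h -> Ck k (iter_pd l h).
Proof.
elim: l k => [|i l IHl] k /=; first by rewrite addn0.
by rewrite addnS -addSn => /IHl[_]; apply.
Qed.

Lemma smooth_funE h : smooth_fun h <-> forall k, Ck k h.
Proof.
split=> [hs k | hC l x]; last by have /Ck_iter_pd[] := hC (1 + size l)%N.
elim: k h hs => [//|k IHk] h hs; split=> [x | i]; first exact: (hs [::]).
by apply: IHk => l x; have := hs (rcons l i) x; rewrite /iter_pd -cats1 foldr_cat.
Qed.

Lemma smooth_fun_differentiable h x : smooth_fun h -> differentiable h x.
Proof. by move/(_ [::] x). Qed.

Lemma smooth_fun_pd i h : smooth_fun h -> smooth_fun (pd i h).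
Proof. by move=> hs l x; have := hs (rcons l i) x; rewrite /iter_pd -cats1 foldr_cat. Qed.

Lemma CkW k h : Ck k.+1 h -> Ck k h.
Proof. by elim: k h => [//|k IHk] h [dh Ch]; split=> // i; apply: IHk. Qed.

Lemma Ck_cst k (c : R) : Ck k (fun _ => c).
Proof.
elim: k c => [//|k IHk] c; split=> [x | i]; first exact: differentiable_cst.
by rewrite (_ : pd i _ = fun _ => 0) //; apply/funext => x; rewrite pd_cst.
Qed.

Lemma CkD k h1 h2 : Ck k h1 -> Ck k h2 -> Ck k (fun y => h1 y + h2 y).
Proof.
elim: k h1 h2 => [//|k IHk] h1 h2 [d1 C1] [d2 C2]; split=> [x | i].
  exact: differentiableD.
rewrite (_ : pd i _ = fun y => pd i h1 y + pd i h2 y); first exact: IHk (C1 i) (C2 i).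
by apply/funext => y; rewrite pdD.
Qed.

Lemma CkM k h1 h2 : Ck k h1 -> Ck k h2 -> Ck k (fun y => h1 y * h2 y).
Proof.
elim: k h1 h2 => [//|k IHk] h1 h2 C1 C2.
have [[d1 C1'] [d2 C2']] := (C1, C2); split=> [x | i].
  exact: differentiableM.
rewrite (_ : pd i _ = fun y => pd i h1 y * h2 y + h1 y * pd i h2 y).
  by apply: CkD; [exact: IHk (C1' i) (CkW C2) | exact: IHk (CkW C1) (C2' i)].
by apply/funext => y; rewrite pdM.
Qed.

Lemma CkV k h : (forall x, h x != 0) -> Ck k h -> Ck k (fun y => (h y)^-1).
Proof.
move=> h0; elim: k h h0 => [//|k IHk] h h0 C; have [dh Ch] := C.
split=> [x | i]; first exact: differentiableV.
rewrite (_ : pd i _ = fun y => -1 * ((h y)^-1 * (h y)^-1) * pd i h y).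
  apply: (CkM (h1 := fun y => -1 * ((h y)^-1 * (h y)^-1))) (Ch i).
  have C' := IHk h h0 (CkW C).
  exact: (CkM (h1 := fun _ => -1)) (Ck_cst _ _) (CkM C' C').
by apply/funext => y; rewrite pdV // mulN1r expr2 invfM.
Qed.

Lemma smooth_fun_cst (c : R) : smooth_fun (fun _ : 'rV[R]_n => c).
Proof. by apply/smooth_funE => k; apply: Ck_cst. Qed.

Lemma smooth_funD h1 h2 : smooth_fun h1 -> smooth_fun h2 ->
  smooth_fun (fun y => h1 y + h2 y).
Proof. by move=> /smooth_funE C1 /smooth_funE C2; apply/smooth_funE => k; apply: CkD. Qed.

Lemma smooth_funM h1 h2 : smooth_fun h1 -> smooth_fun h2 ->
  smooth_fun (fun y => h1 y * h2 y).
Proof. by move=> /smooth_funE C1 /smooth_funE C2; apply/smooth_funE => k; apply: CkM. Qed.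

Lemma smooth_funV h : (forall x, h x != 0) -> smooth_fun h ->
  smooth_fun (fun y => (h y)^-1).
Proof. by move=> h0 /smooth_funE C; apply/smooth_funE => k; apply: CkV. Qed.

Lemma smooth_fun_sum (I : Type) (r : seq I) (P : pred I) (F : I -> 'rV[R]_n -> R) :
  (forall i, P i -> smooth_fun (F i)) ->
  smooth_fun (fun y => \sum_(i <- r | P i) F i y).
Proof.
move=> FS; rewrite -fct_sumE; apply: big_ind => //; [exact: smooth_fun_cst | exact: smooth_funD].
Qed.

Lemma smooth_fun_prod (I : Type) (r : seq I) (P : pred I) (F : I -> 'rV[R]_n -> R) :
  (forall i, P i -> smooth_fun (F i)) ->
  smooth_fun (fun y => \prod_(i <- r | P i) F i y).
Proof.
move=> FS; rewrite -fct_prodE; apply: big_ind => //; [exact: smooth_fun_cst | exact: smooth_funM].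
Qed.

End SmoothFunctions.

Lemma le_dist_split (F : numFieldType) (a b p q e : F) :
  p = q -> `|a - p| < e / 2 -> `|b - q| < e / 2 -> `|a - b| <= e.
Proof.
move=> -> aq bq; have -> : a - b = (a - q) + (q - b) by rewrite addrA subrK.
by rewrite [e]splitr (le_trans (ler_normD _ _)) // ltW // ltrD // distrC.
Qed.

Section Schwarz.
Variables (R : realType) (n : nat).
Implicit Types (h : 'rV[R]_n -> R) (x v w : 'rV[R]_n).

Lemma derive_along_line h x v (s : R) :
  derivable h (x + s *: v) v ->
  derivable (fun r : R => h (x + r *: v)) s 1 /\
  derive (fun r : R => h (x + r *: v)) s 1 = derive h (x + s *: v) v.
Proof.
rewrite /derivable /derive /=.
have -> : (fun r : R => r^-1 *: (h (x + (r%:A + s) *: v) - h (x + s *: v))) =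
          (fun r : R => r^-1 *: (h (r *: v + (x + s *: v)) - h (x + s *: v))).
  by apply/funext => r; rewrite -[r%:A]/(r * 1) mulr1 scalerDl addrCA.
by [].
Qed.

Lemma mean_value_along h x v (t : R) : (forall y, derivable h y v) -> 0 < t ->
  exists2 c, 0 < c < t & h (x + t *: v) - h x = t * derive h (x + c *: v) v.
Proof.
move=> dh t0.
have [||c ct E] := @MVT R (fun r => h (x + r *: v))
                           (fun r => derive h (x + r *: v) v) 0 t t0.
- by move=> r _; have [dr <-] := derive_along_line (dh (x + r *: v)); exact: derivableP.
- apply: derivable_within_continuous => r _.
  by have [] := derive_along_line (dh (x + r *: v)).
by exists c; move: ct E; rewrite in_itv scale0r addr0 subr0 mulrC.
Qed.

Lemma second_difference h i k x (t : R) :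
  (forall y, differentiable h y) -> (forall y, differentiable (pd i h) y) -> 0 < t ->
  exists c1 c2, [/\ 0 < c1 < t, 0 < c2 < t &
    h (x + t *: evec R i + t *: evec R k) - h (x + t *: evec R i)
    - h (x + t *: evec R k) + h x
    = t * t * pd k (pd i h) (x + c1 *: evec R i + c2 *: evec R k)].
Proof.
move=> dh dih t0; set ei := evec R i; set ek := evec R k.
set g := fun y => h (y + t *: ek) - h y.
have dg y : derivable g y ei.
  apply: derivableB; last exact: diff_derivable.
  have -> : (fun y => h (y + t *: ek)) = h \o shift (t *: ek) by [].
  exact/diff_derivable/differentiable_comp.
have [c1 c1t E1] := mean_value_along x dg t0.
have [c2 c2t E2] := mean_value_along (x + c1 *: ei)
  (fun y => diff_derivable (v := ek) (dih y)) t0.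
exists c1, c2; split => //.
have dgE y : derive g y ei = pd i h (y + t *: ek) - pd i h y.
  rewrite /g deriveB; last exact: diff_derivable.
    by rewrite /pd /derive /=; congr (_ - _); do 2 f_equal; apply/funext => r; rewrite addrA.
  have -> : (fun y => h (y + t *: ek)) = h \o shift (t *: ek) by [].
  exact/diff_derivable/differentiable_comp.
by rewrite -mulrA -E2 -dgE -E1 /g; ring.
Qed.

Lemma mixed_partials_near h i k x (t : R) :
  (forall y, differentiable h y) ->
  (forall y, differentiable (pd i h) y) -> (forall y, differentiable (pd k h) y) ->
  0 < t -> exists c1 c2 c3 c4, [/\ 0 < c1 < t, 0 < c2 < t, 0 < c3 < t, 0 < c4 < t &
    pd k (pd i h) (x + c1 *: evec R i + c2 *: evec R k)
    = pd i (pd k h) (x + c3 *: evec R k + c4 *: evec R i)].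
Proof.
move=> dh dih dkh t0.
have [c1 [c2 [c1t c2t E1]]] := second_difference k x dh dih t0.
have [c3 [c4 [c3t c4t E2]]] := second_difference i x dh dkh t0.
have tt0 : t * t != 0 by rewrite mulf_neq0 // lt0r_neq0.
exists c1, c2, c3, c4; split; [exact: c1t | exact: c2t | exact: c3t | exact: c4t |].
apply: (mulfI tt0); apply: (etrans (esym E1)); apply: (etrans _ E2).
by rewrite (addrAC x (t *: evec R k)); ring.
Qed.

Lemma schwarz h i k x :
  (forall y, differentiable h y) ->
  (forall y, differentiable (pd i h) y) -> (forall y, differentiable (pd k h) y) ->
  {for x, continuous (pd k (pd i h))} -> {for x, continuous (pd i (pd k h))} ->
  pd k (pd i h) x = pd i (pd k h) x.
Proof.
move=> dh dih dkh cA cB.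
apply/eqP; rewrite -subr_eq0 -normr_le0; apply/ler_addgt0Pr => e e0; rewrite add0r.
have e20 : 0 < e / 2 by rewrite divr_gt0.
have : \forall z \near x, `|pd k (pd i h) x - pd k (pd i h) z| < e / 2 /\
                          `|pd i (pd k h) x - pd i (pd k h) z| < e / 2.
  by apply: filterI; [move/cvgrPdist_lt: cA | move/cvgrPdist_lt: cB]; apply.
move=> /(nbhs_ballP x _).1[d d0 Hd].
set C := `|evec R i| + `|evec R k| + 1.
have C0 : 0 < C by rewrite ltr_pwDr // addr_ge0.
have t0 : 0 < d / C by rewrite divr_gt0.
have close u w (c1 c2 : R) : `|u| + `|w| + 1 = C ->
    0 < c1 < d / C -> 0 < c2 < d / C -> ball x d (x + c1 *: u + c2 *: w).
  move=> uwC /andP[c10 c1t] /andP[c20 c2t]; rewrite -ball_normE /ball /=.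
  rewrite -addrA opprD addrA subrr add0r normrN.
  apply: le_lt_trans (ler_normD _ _) _; rewrite !normrZ !gtr0_norm //.
  rewrite -[d in X in _ < X](divfK (lt0r_neq0 C0)) -{2}uwC !mulrDr mulr1 ltr_pwDr //.
  by rewrite lerD // ler_wpM2r // ltW.
have [c1 [c2 [c3 [c4 [c1t c2t c3t c4t AB]]]]] := mixed_partials_near x dh dih dkh t0.
have Cki : `|evec R k| + `|evec R i| + 1 = C by rewrite /C (addrC `|evec R k|).
have [HA _] := Hd _ (close _ _ _ _ erefl c1t c2t).
have [_ HB] := Hd _ (close _ _ _ _ Cki c3t c4t).
exact: le_dist_split AB HA HB.
Qed.

Lemma smooth_pdC h i k x : smooth_fun h -> pd k (pd i h) x = pd i (pd k h) x.
Proof.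
move=> hs; have d2 j l y : differentiable (pd j (pd l h)) y.
  by apply/smooth_fun_differentiable/smooth_fun_pd/smooth_fun_pd.
apply: schwarz => [y|y|y||].
- exact: smooth_fun_differentiable.
- exact/smooth_fun_differentiable/smooth_fun_pd.
- exact/smooth_fun_differentiable/smooth_fun_pd.
- exact: differentiable_continuous (d2 _ _ _).
- exact: differentiable_continuous (d2 _ _ _).
Qed.

End Schwarz.

Section MatrixFields.
Variables (R : realType) (n : nat).

Definition mxpd p q (i : 'I_n) (M : 'rV[R]_n -> 'M[R]_(p, q)) (x : 'rV[R]_n) :
  'M[R]_(p, q) := \matrix_(s, t) pd i (fun y => M y s t) x.

Lemma mxpdE p q i (M : 'rV[R]_n -> 'M[R]_(p, q)) x s t :
  mxpd i M x s t = pd i (fun y => M y s t) x.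
Proof. by rewrite mxE. Qed.

Definition smooth_mx p q (M : 'rV[R]_n -> 'M[R]_(p, q)) : Prop :=
  forall s t, smooth_fun (fun y => M y s t).

Section Closure.
Variables (p q r : nat).
Implicit Types (M : 'rV[R]_n -> 'M[R]_(p, q)) (N : 'rV[R]_n -> 'M[R]_(q, r)).

Lemma smooth_mx_cst (A : 'M[R]_(p, q)) : smooth_mx (fun _ => A).
Proof. by move=> s t; apply: smooth_fun_cst. Qed.

Lemma smooth_mxD M1 M2 : smooth_mx M1 -> smooth_mx M2 -> smooth_mx (fun y => M1 y + M2 y).
Proof.
move=> sM1 sM2 s t; under eq_fun do rewrite mxE.
exact: smooth_funD.
Qed.

Lemma smooth_mxM M N : smooth_mx M -> smooth_mx N -> smooth_mx (fun y => M y *m N y).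
Proof.
move=> sM sN s t; under eq_fun do rewrite mxE.
by apply: smooth_fun_sum => k _; apply: smooth_funM.
Qed.

Lemma smooth_mx_tr M : smooth_mx M -> smooth_mx (fun y => (M y)^T).
Proof. by move=> sM s t; under eq_fun do rewrite mxE; apply: sM. Qed.

Lemma smooth_mx_pd i M : smooth_mx M -> smooth_mx (mxpd i M).
Proof. by move=> sM s t; under eq_fun do rewrite mxE; apply: smooth_fun_pd. Qed.

Lemma mxpd_cst i (A : 'M[R]_(p, q)) x : mxpd i (fun _ => A) x = 0.
Proof. by apply/matrixP => s t; rewrite !mxE pd_cst. Qed.

Lemma mxpd_tr i M x : mxpd i (fun y => (M y)^T) x = (mxpd i M x)^T.
Proof. by apply/matrixP => s t; rewrite !mxE; congr pd; apply/funext => y; rewrite mxE. Qed.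

Lemma mxpdD i M1 M2 x : smooth_mx M1 -> smooth_mx M2 ->
  mxpd i (fun y => M1 y + M2 y) x = mxpd i M1 x + mxpd i M2 x.
Proof.
move=> sM1 sM2; apply/matrixP => s t; rewrite !mxE -pdD; last 2 first.
- exact: smooth_fun_differentiable.
- exact: smooth_fun_differentiable.
by congr pd; apply/funext => y; rewrite mxE.
Qed.

Lemma mxpdM i M N x : smooth_mx M -> smooth_mx N ->
  mxpd i (fun y => M y *m N y) x = mxpd i M x *m N x + M x *m mxpd i N x.
Proof.
move=> sM sN; apply/matrixP => s t; rewrite !mxE.
rewrite (_ : (fun y => _) = fun y => \sum_k M y s k * N y k t); last first.
  by apply/funext => y; rewrite mxE.
rewrite pd_sum => [|k]; last by apply/smooth_fun_differentiable/smooth_funM.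
rewrite -big_split; apply: eq_bigr => k _ /=.
by rewrite pdM ?mxpdE //; apply: smooth_fun_differentiable.
Qed.

End Closure.

Lemma smooth_fun_det p (M : 'rV[R]_n -> 'M[R]_p) :
  smooth_mx M -> smooth_fun (fun y => \det (M y)).
Proof.
move=> sM; apply: smooth_fun_sum => s _.
by apply: smooth_funM; [exact: smooth_fun_cst | apply: smooth_fun_prod => i _].
Qed.

Lemma smooth_mx_inv p (M : 'rV[R]_n -> 'M[R]_p) :
  (forall y, M y \in unitmx) -> smooth_mx M -> smooth_mx (fun y => invmx (M y)).
Proof.
move=> uM sM s t; under eq_fun do rewrite /invmx uM !mxE.
apply: smooth_funM.
  apply: smooth_funV; last exact: smooth_fun_det.
  by move=> y; rewrite -unitfE -unitmxE.
apply: smooth_funM; first exact: smooth_fun_cst.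
by apply: smooth_fun_det => a b; under eq_fun do rewrite !mxE; apply: sM.
Qed.

Lemma mxpd_inv p i (M : 'rV[R]_n -> 'M[R]_p) x :
  (forall y, M y \in unitmx) -> smooth_mx M ->
  mxpd i (fun y => invmx (M y)) x = - (invmx (M x) *m mxpd i M x *m invmx (M x)).
Proof.
move=> uM sM; have sMi := smooth_mx_inv uM sM.
have : mxpd i (fun y => invmx (M y) *m M y) x = 0.
  by under eq_fun do rewrite mulVmx //; rewrite mxpd_cst.
rewrite mxpdM // => /(congr1 (mulmx^~ (invmx (M x)))).
rewrite mul0mx mulmxDl -[_ *m M x *m _]mulmxA mulmxV // mulmx1 => /eqP.
by rewrite addr_eq0 => /eqP.
Qed.

End MatrixFields.

Section PositiveDefinite.
Variable R : realFieldType.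
Implicit Type q : nat.

Lemma mulmx_trmx_row q (u : 'rV[R]_q) : (u *m u^T) 0 0 = \sum_k u 0 k ^+ 2.
Proof. by rewrite mxE; apply: eq_bigr => k _; rewrite mxE expr2. Qed.

Lemma mulmx_trmx_row_ge0 q (u : 'rV[R]_q) : 0 <= (u *m u^T) 0 0.
Proof. by rewrite mulmx_trmx_row sumr_ge0 // => k _; apply: sqr_ge0. Qed.

Lemma mulmx_trmx_row_eq0 q (u : 'rV[R]_q) : ((u *m u^T) 0 0 == 0) = (u == 0).
Proof.
rewrite mulmx_trmx_row psumr_eq0 /=; last by move=> k _; apply: sqr_ge0.
apply/allP/eqP => [u0 | -> k _]; last by rewrite mxE expr0n.
by apply/rowP => k; apply/eqP; rewrite mxE -sqrf_eq0 u0 ?mem_index_enum.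
Qed.

Lemma unitmx_1_add_mul_tr p q (A : 'M[R]_(p, q)) : 1%:M + A^T *m A \in unitmx.
Proof.
rewrite -row_free_unit; apply/inj_row_free => v /(congr1 (fun B => (B *m v^T) 0 0)).
rewrite mulmxDr mulmx1 mulmxDl mul0mx.
have -> : v *m (A^T *m A) *m v^T = (v *m A^T) *m (v *m A^T)^T.
  by rewrite trmx_mul trmxK !mulmxA.
rewrite [LHS]mxE [RHS]mxE => /eqP.
by rewrite paddr_eq0 ?mulmx_trmx_row_ge0 // mulmx_trmx_row_eq0 => /andP[/eqP].
Qed.

End PositiveDefinite.

Lemma sum_diag_mulmx3 (R : comNzRingType) m n (P : 'M[R]_m)
    (X : 'I_n -> 'M[R]_(n, m)) (Y : 'I_n -> 'M[R]_(m, n)) k :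
  \sum_i (X i *m P *m Y i) i k = \sum_a \sum_b P b a * \sum_i X i i b * Y i a k.
Proof.
rewrite (eq_bigr (fun i => \sum_a \sum_b X i i b * P b a * Y i a k)); last first.
  by move=> i _; rewrite mxE; apply: eq_bigr => a _; rewrite mxE big_distrl.
rewrite exchange_big; apply: eq_bigr => a _; rewrite exchange_big; apply: eq_bigr => b _.
by rewrite big_distrr; apply: eq_bigr => i _ /=; ring.
Qed.

Lemma ricci_mx (R : comNzRingType) m n (Dd : 'I_n -> 'M[R]_(m, n)) (H : 'I_m -> 'M[R]_n)
    (G : 'M[R]_n) (P : 'M[R]_m) :
  (forall a s t, H a s t = Dd t a s) -> (forall a s t, H a s t = H a t s) ->
  \matrix_(j, k) \sum_i (G *m ((Dd i)^T *m P *m Dd j - (Dd j)^T *m P *m Dd i)) i k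
  = \sum_a \sum_b P b a *: (\tr (G *m H b) *: H a - (G *m H b)^T *m H a).
Proof.
move=> HE Hsym.
have GDd i j b : (G *m (Dd j)^T) i b = (G *m H b) i j.
  by rewrite !mxE; apply: eq_bigr => s _; rewrite !mxE HE.
apply/matrixP => j k; rewrite !mxE summxE.
under eq_bigr do rewrite mulmxBr !mulmxA mxE [X in _ + X]mxE.
rewrite sumrB !sum_diag_mulmx3 -sumrB; apply: eq_bigr => a _.
rewrite summxE -sumrB; apply: eq_bigr => b _.
rewrite !mxE -mulrBr; congr (_ * (_ - _)).
  have trE : \sum_i (G *m (Dd i)^T) i b = \tr (G *m H b).
    by apply: eq_bigr => i _; rewrite GDd.
  by rewrite -HE [H a k j]Hsym -?big_distrl trE.
by apply: eq_bigr => i _; rewrite GDd [_^T _ _]mxE -HE [H a k i]Hsym.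
Qed.

Lemma invmx_1_add_mul_tr (R : comUnitRingType) m n (D : 'M[R]_(m, n)) :
  1%:M + D^T *m D \in unitmx ->
  invmx (1%:M + D *m D^T) = 1%:M - D *m (invmx (1%:M + D^T *m D) *m D^T).
Proof.
move=> gU; set G := invmx (1%:M + D^T *m D).
have UP : (1%:M + D *m D^T) *m (1%:M - D *m (G *m D^T)) = 1%:M.
  rewrite mulmxBr mulmx1 !mulmxA mulmxDl mul1mx -[D *m D^T *m D]mulmxA.
  have -> : D + D *m (D^T *m D) = D *m (1%:M + D^T *m D) by rewrite mulmxDr mulmx1.
  by rewrite -(mulmxA D) mulmxV // mulmx1 addrK.
have [Uu _] := mulmx1_unit UP.
by rewrite -[RHS](mulKmx Uu) UP mulmx1.
Qed.

Lemma deriv_ginv_tr_mx (R : comNzRingType) m n (D Di : 'M[R]_(m, n)) (G : 'M[R]_n) :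
  - (G *m (Di^T *m D + D^T *m Di) *m G) *m D^T + G *m Di^T
  = G *m Di^T *m (1%:M - D *m (G *m D^T)) - G *m D^T *m Di *m (G *m D^T).
Proof.
rewrite mulmxBr mulmx1 mulNmx !mulmxDr !mulmxDl opprD !mulmxA.
by rewrite [LHS]addrC addrA.
Qed.

(* With Gamma_i = W Di and d_i W = G Di^T P - W Di W, the left-hand side is
   d_i Gamma_j - d_j Gamma_i + [Gamma_i, Gamma_j], E being d_i d_j D. *)
Lemma gauss_mx (R : comNzRingType) m n (G : 'M[R]_n) (W : 'M[R]_(n, m)) (P : 'M[R]_m)
    (Di Dj E : 'M[R]_(m, n)) :
  (G *m Di^T *m P - W *m Di *m W) *m Dj + W *m E
  - ((G *m Dj^T *m P - W *m Dj *m W) *m Di + W *m E)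
  + (W *m Di *m (W *m Dj) - W *m Dj *m (W *m Di))
  = G *m (Di^T *m P *m Dj - Dj^T *m P *m Di).
Proof.
rewrite !mulmxBl mulmxBr !mulmxA.
by rewrite [X in _ - X]addrC addrKA addrAC subrKA opprB subrKA.
Qed.

Lemma mxE_sub_commutator (R : pzRingType) n (A B C D : 'M[R]_n) l k :
  (A - B + (C *m D - D *m C)) l k = A l k - B l k + \sum_p (C l p * D p k - D l p * C p k).
Proof. by rewrite !mxE sumrB. Qed.

Lemma ricci_operator_mx (R : comNzRingType) m n (H : 'I_m -> 'M[R]_n) (G : 'M[R]_n)
    (P : 'M[R]_m) :
  G^T = G -> (forall b, (H b)^T = H b) ->
  G *m (\sum_a \sum_b P b a *: (\tr (G *m H b) *: H a - (G *m H b)^T *m H a))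
  = \sum_a \sum_b P b a *: (\tr (G *m H b) *: (G *m H a) - (G *m H b) *m (G *m H a)).
Proof.
move=> Gsym Hsym; rewrite mulmx_sumr; apply: eq_bigr => a _.
rewrite mulmx_sumr; apply: eq_bigr => b _.
by rewrite -scalemxAr mulmxBr -scalemxAr trmx_mul Gsym Hsym !mulmxA.
Qed.

Lemma commutator_mx (R : comNzRingType) m n (A : 'I_m -> 'M[R]_n) (P : 'M[R]_m) c :
  let Rc := \sum_a \sum_b P b a *: (\tr (A b) *: A a - A b *m A a) in
  A c *m Rc - Rc *m A c
  = \sum_mu \sum_nu P mu nu *: (\tr (A mu) *: (A c *m A nu - A nu *m A c)
        + (A mu *m A c - A c *m A mu) *m A nu + A mu *m (A nu *m A c - A c *m A nu)).
Proof.
rewrite /= mulmx_sumr mulmx_suml -sumrB exchange_big; apply: eq_bigr => b _.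
rewrite mulmx_sumr mulmx_suml -sumrB; apply: eq_bigr => a _.
rewrite -scalemxAr -scalemxAl -scalerBr; congr (_ *: _).
rewrite mulmxBr mulmxBl -scalemxAr -scalemxAl scalerBr !mulmxBl !mulmxBr !mulmxA.
move: (\tr (A a) *: (A c *m A b)) (A c *m A a *m A b) (\tr (A a) *: (A b *m A c)).
move: (A a *m A b *m A c) (A a *m A c *m A b) => q u x p y.
by rewrite opprB -[RHS]addrA [u - p + _]addrC subrKA addrACA [RHS]addrACA [- p + _]addrC.
Qed.

Section Graph.
Variables (R : realType) (n m : nat) (f : 'rV[R]_n -> 'rV[R]_m).
Hypothesis hf : forall a, smooth_fun (fcomp f a).

Definition Dfmx (y : 'rV[R]_n) : 'M[R]_(m, n) := \matrix_(a, i) Df f a i y.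

Lemma DfmxE y a i : Dfmx y a i = Df f a i y.
Proof. by rewrite /Dfmx mxE. Qed.

Lemma smooth_Dfmx : smooth_mx Dfmx.
Proof. by move=> a i; under eq_fun do rewrite mxE; apply/smooth_fun_pd/hf. Qed.

Lemma gmxE y : gmx f y = 1%:M + (Dfmx y)^T *m Dfmx y.
Proof.
by apply/matrixP => i j; rewrite !mxE; congr (_ + _); apply: eq_bigr => a _; rewrite !mxE.
Qed.

Lemma UmxE y : Umx f y = 1%:M + Dfmx y *m (Dfmx y)^T.
Proof.
by apply/matrixP => a b; rewrite !mxE; congr (_ + _); apply: eq_bigr => i _; rewrite !mxE.
Qed.

Lemma gmx_unit y : gmx f y \in unitmx.
Proof. by rewrite gmxE unitmx_1_add_mul_tr. Qed.

Lemma UinvE y : Uinv f y = 1%:M - Dfmx y *m (ginv f y *m (Dfmx y)^T).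
Proof. by rewrite /Uinv /ginv UmxE gmxE invmx_1_add_mul_tr // -gmxE gmx_unit. Qed.

Lemma smooth_gmx : smooth_mx (gmx f).
Proof.
rewrite (_ : gmx f = fun y => 1%:M + (Dfmx y)^T *m Dfmx y); last exact/funext/gmxE.
apply: smooth_mxD; first exact: smooth_mx_cst.
by apply: smooth_mxM; [apply: smooth_mx_tr |]; apply: smooth_Dfmx.
Qed.

Lemma smooth_ginv : smooth_mx (ginv f).
Proof. exact: smooth_mx_inv gmx_unit smooth_gmx. Qed.

Lemma Hess_Dfmx a y s t : Hess f a y s t = mxpd t Dfmx y a s.
Proof. by rewrite !mxE; congr pd; apply/funext => z; rewrite mxE. Qed.

Lemma Hess_sym a y s t : Hess f a y s t = Hess f a y t s.
Proof. by rewrite !mxE; apply/smooth_pdC/hf. Qed.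

Lemma mxpd_DfmxC i j y :
  mxpd i (mxpd j Dfmx) y = mxpd j (mxpd i Dfmx) y.
Proof.
apply/matrixP => a s.
have E p z : mxpd p Dfmx z a s = pd p (Df f a s) z.
  by rewrite [LHS]mxpdE; congr pd; apply/funext => w; apply: DfmxE.
rewrite [LHS]mxpdE [RHS]mxpdE.
transitivity (pd i (pd j (Df f a s)) y); first by congr pd; apply/funext => z; apply: E.
transitivity (pd j (pd i (Df f a s)) y); last by congr pd; apply/funext => z; rewrite E.
exact/smooth_pdC/smooth_fun_pd/hf.
Qed.

Local Notation W y := (ginv f y *m (Dfmx y)^T).

Lemma pd_metric p s t y : pd p (metric f s t) y =
  \sum_a (Hess f a y s p * Df f a t y + Df f a s y * Hess f a y t p).
Proof.
have dDf a s' z : differentiable (Df f a s') z by apply/smooth_fun_differentiable/smooth_fun_pd/hf.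
have dsum : differentiable (fun z => \sum_a Df f a s z * Df f a t z) y.
  by apply/smooth_fun_differentiable/smooth_fun_sum => a _;
    apply: smooth_funM; apply/smooth_fun_pd/hf.
rewrite /metric pdD //.
rewrite pd_cst add0r pd_sum => [|a]; last exact: differentiableM.
by apply: eq_bigr => a _; rewrite pdM // !mxE.
Qed.

Lemma christoffel_graph l i k y :
  christoffel f l i k y = (W y *m mxpd i Dfmx y) l k.
Proof.
have E p : pd i (metric f k p) y + pd k (metric f i p) y - pd p (metric f i k) y
    = 2 * \sum_a Hess f a y i k * Df f a p y.
  rewrite !pd_metric -big_split /= -sumrB big_distrr /=; apply: eq_bigr => a _.
  rewrite [Hess f a y k i]Hess_sym [Hess f a y p i]Hess_sym [Hess f a y p k]Hess_sym.
  move: (Hess f a y i k) (Hess f a y i p) (Hess f a y k p) => h1 h2 h3.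
  move: (Df f a i y) (Df f a k y) (Df f a p y) => d1 d2 d3; ring.
rewrite /christoffel.
transitivity (\sum_p \sum_a Hess f a y i k * (ginv f y l p * Df f a p y)).
  rewrite big_distrr; apply: eq_bigr => p _ /=; rewrite E.
  rewrite mulrCA mulrA mulrA divfK ?pnatr_eq0 // big_distrr; apply: eq_bigr => a _.
  by rewrite mulrCA.
rewrite exchange_big [RHS]mxE; apply: eq_bigr => a _.
rewrite -Hess_Dfmx [Hess f a y k i]Hess_sym -big_distrr [_ l a]mxE mulrC; congr (_ * _).
by apply: eq_bigr => p _; rewrite [_^T p a]mxE DfmxE.
Qed.

Lemma smooth_W : smooth_mx (fun y => W y).
Proof. exact: smooth_mxM smooth_ginv (smooth_mx_tr smooth_Dfmx). Qed.

Lemma mxpd_gmx i x : mxpd i (gmx f) x = (mxpd i Dfmx x)^T *m Dfmx x + (Dfmx x)^T *m mxpd i Dfmx x.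
Proof.
have sJ := smooth_Dfmx; have sJt := smooth_mx_tr sJ.
rewrite (_ : gmx f = fun y => 1%:M + (Dfmx y)^T *m Dfmx y); last exact/funext/gmxE.
rewrite mxpdD; [|exact: smooth_mx_cst|exact: smooth_mxM sJt sJ].
by rewrite mxpd_cst add0r mxpdM // mxpd_tr.
Qed.

Lemma mxpd_W i x : mxpd i (fun y => W y) x =
  ginv f x *m (mxpd i Dfmx x)^T *m Uinv f x - W x *m mxpd i Dfmx x *m W x.
Proof.
rewrite mxpdM; [|exact: smooth_ginv|exact: smooth_mx_tr smooth_Dfmx].
rewrite (_ : ginv f = fun y => invmx (gmx f y)) // mxpd_inv; last 2 first.
- exact: gmx_unit.
- exact: smooth_gmx.
by rewrite mxpd_tr mxpd_gmx UinvE; apply: deriv_ginv_tr_mx.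
Qed.

Lemma riem_graph l i j k x : riem f l i j k x =
  (ginv f x *m ((mxpd i Dfmx x)^T *m Uinv f x *m mxpd j Dfmx x
                - (mxpd j Dfmx x)^T *m Uinv f x *m mxpd i Dfmx x)) l k.
Proof.
have dGam q r : pd q (christoffel f l r k) x = mxpd q (fun y => W y *m mxpd r Dfmx y) x l k.
  by rewrite [RHS]mxpdE; congr pd; apply/funext => y; apply: christoffel_graph.
rewrite /riem (dGam i j) (dGam j i).
under eq_bigr do rewrite !christoffel_graph.
have sW := smooth_W; have sJi := smooth_mx_pd i smooth_Dfmx.
have sJj := smooth_mx_pd j smooth_Dfmx.
rewrite [mxpd i _ x]mxpdM // [mxpd j (fun y => W y *m mxpd i Dfmx y) x]mxpdM //.
rewrite !mxpd_W (mxpd_DfmxC j i).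
by rewrite -mxE_sub_commutator gauss_mx.
Qed.

Lemma ginv_sym y : (ginv f y)^T = ginv f y.
Proof.
by rewrite /ginv trmx_inv gmxE linearD /= trmx1 trmx_mul trmxK.
Qed.

Lemma Hess_tr a y : (Hess f a y)^T = Hess f a y.
Proof. by apply/matrixP => s t; rewrite [LHS]mxE Hess_sym. Qed.

Lemma Ricmx_graph x : Ricmx f x = \sum_a \sum_b Uinv f x b a *:
  (\tr (shapeop f b x) *: Hess f a x - (shapeop f b x)^T *m Hess f a x).
Proof.
rewrite -(ricci_mx _ _ (fun a => Hess_Dfmx a x) (fun a => Hess_sym a x)); apply/matrixP => j k.
by rewrite [LHS]mxE [RHS]mxE; apply: eq_bigr => i _; apply: riem_graph.
Qed.

Lemma Rc_op_graph x : Rc_op f x = \sum_a \sum_b Uinv f x b a *: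
  (\tr (shapeop f b x) *: shapeop f a x - shapeop f b x *m shapeop f a x).
Proof. by rewrite /Rc_op Ricmx_graph ricci_operator_mx // ?ginv_sym // => b; apply: Hess_tr. Qed.

End Graph.

Theorem lemma2p2 (R : realType) (n m : nat) (f : 'rV[R]_n -> 'rV[R]_m)
  (hf : forall a : 'I_m, smooth_fun (fcomp f a))
  (x : 'rV[R]_n) (alpha : 'I_m) :
  shapeop f alpha x *m Rc_op f x - Rc_op f x *m shapeop f alpha x =
  \sum_(mu < m) \sum_(nu < m)
     Uinv f x mu nu *:
       (\tr (shapeop f mu x) *: normal_curv f nu alpha x
        + normal_curv f alpha mu x *m shapeop f nu x
        + shapeop f mu x *m normal_curv f alpha nu x).
Proof. by rewrite (Rc_op_graph hf) /normal_curv; apply: commutator_mx. Qed.
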